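(* Let $R$ be a commutative ring and let $0\to A\xrightarrow{f}B\xrightarrow{g}C\to 0$ be an exact sequence of $R$-modules. This sequence is $w$-split if and only if there exist $J=\langle d_1,\dots,d_n\rangle\in\mathrm{GV}(R)$ and $q_1,\dots,q_n\in\mathrm{Hom}_R(B,A)$ such that $q_kf=\eta^A_{d_k}$ for all $k=1,\dots,n$. Moreover, suppose $J=\langle d_1,\dots,d_n\rangle\in\mathrm{GV}(R)$ and $h_1,\dots,h_n\in\mathrm{Hom}_R(C,B)$ satisfy $gh_k=\eta^C_{d_k}$ for all $k$. Then there exist $q_k\in\mathrm{Hom}_R(B,A)$ with $q_kf=\eta^A_{d_k}$ and $\eta^B_{d_k}=fq_k+h_kg$ for each $k$.
   Context: $R$ is a commutative ring with identity. For an $R$-module $M$ and $s\in R$, $\eta^M_s:M\to M$ is multiplication by $s$. An ideal $J$ of $R$ is a GV-ideal if $J$ is finitely generated and the natural map $R\to\mathrm{Hom}_R(J,R)$ is an isomorphism; $\mathrm{GV}(R)$ is the set of GV-ideals. A short exact sequence $0\to A\xrightarrow{f}B\xrightarrow{g}C\to 0$ is $w$-split if there exist $J=\langle d_1,\dots,d_n\rangle\in\mathrm{GV}(R)$ and $h_1,\dots,h_n\in\mathrm{Hom}_R(C,B)$ with $gh_k=\eta^C_{d_k}$ for all $k$. *)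

From HB Require Import structures.
From mathcomp Require Import all_boot all_algebra.
Set Implicit Arguments. Unset Strict Implicit. Unset Printing Implicit Defensive.
Import GRing.Theory.
Local Open Scope ring_scope.

(* Commutative ring with identity: comPzRingType (the zero ring is allowed). *)

Definition eta_mul {R : comPzRingType} (M : lmodType R) (s : R) : M -> M :=
  fun x => s *: x.
Arguments eta_mul {R} M s _.

Definition in_ideal (R : comPzRingType) (n : nat) (d : 'I_n -> R) (x : R) : Prop :=
  exists c : 'I_n -> R, x = \sum_(i < n) c i * d i.

(* phi : J -> R is R-linear (an element of Hom_R(J,R)), phi given as a
   function R -> R whose values outside J are irrelevant *)
Definition ideal_hom (R : comPzRingType) (n : nat) (d : 'I_n -> R) (phi : R -> R) : Prop :=
  (forall x y, in_ideal d x -> in_ideal d y -> phi (x + y) = phi x + phi y) /\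
  (forall a x, in_ideal d x -> phi (a * x) = a * phi x).

(* J = <d_1,...,d_n> is a GV-ideal: J is finitely generated (by d) and the natural
   map R -> Hom_R(J,R), r |-> (x |-> r x), is injective and surjective. *)
Definition GV_ideal (R : comPzRingType) (n : nat) (d : 'I_n -> R) : Prop :=
  (forall r : R, (forall x, in_ideal d x -> r * x = 0) -> r = 0) /\
  (forall phi : R -> R, ideal_hom d phi ->
     exists r : R, forall x, in_ideal d x -> phi x = r * x).

Definition short_exact (R : comPzRingType) (A B C : lmodType R)
  (f : {linear A -> B}) (g : {linear B -> C}) : Prop :=
  injective f /\ (forall c : C, exists b : B, g b = c) /\
  (forall b : B, g b = 0 <-> exists a : A, b = f a).

Definition w_split (R : comPzRingType) (A B C : lmodType R)
  (f : {linear A -> B}) (g : {linear B -> C}) : Prop :=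
  exists (n : nat) (d : 'I_n -> R), GV_ideal d /\
    exists h : 'I_n -> {linear C -> B},
      forall k, (fun c => g (h k c)) =1 eta_mul C (d k).

(* For one scalar s: if g h = s·id, then s·id - h g maps B into ker g = f(A),
   so it factors as f q, and injectivity of f gives q f = s·id.  Conversely, if
   q f = s·id, then s·id - f q vanishes on f(A) = ker g, so it factors as h g
   through the surjection g, and then g h = s·id.  Applying this to each
   generator d_k proves both claims; the GV property of J is only carried along. *)
From HB Require Import structures.
From mathcomp Require Import all_boot all_algebra.
Set Implicit Arguments. Unset Strict Implicit. Unset Printing Implicit Defensive.
Import GRing.Theory.
Local Open Scope ring_scope.

Section EtaMulLinear.
Variables (R : comPzRingType) (M : lmodType R) (s : R).

Lemma eta_mul_is_linear : linear (eta_mul M s).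
Proof. by move=> a x y; rewrite /eta_mul scalerDr !scalerA mulrC. Qed.

HB.instance Definition _ :=
  GRing.isLinear.Build R M M *:%R (eta_mul M s) eta_mul_is_linear.

End EtaMulLinear.

Section LiftThroughMono.
Variables (R : pzRingType) (U A B : lmodType R).
Variables (f : {linear A -> B}) (phi : {linear U -> B}).
Hypotheses (f_inj : injective f) (phi_im : forall u, exists a, phi u = f a).

Lemma mono_lift_ex u : exists a, f a == phi u.
Proof. by have [a ->] := phi_im u; exists a. Qed.

Definition mono_lift u : A := xchoose (mono_lift_ex u).

Lemma mono_liftK u : f (mono_lift u) = phi u.
Proof. exact/eqP/(xchooseP (mono_lift_ex u)). Qed.

Lemma mono_lift_is_linear : linear mono_lift.
Proof. by move=> a u v; apply: f_inj; rewrite linearP !mono_liftK linearP. Qed.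

Lemma lift_through_mono : {q : {linear U -> A} | forall u, f (q u) = phi u}.
Proof.
exists (HB.pack_for {linear U -> A} mono_lift
  (GRing.isLinear.Build R U A *:%R mono_lift mono_lift_is_linear)).
exact: mono_liftK.
Qed.

End LiftThroughMono.

Section LiftThroughEpi.
Variables (R : pzRingType) (U B C : lmodType R).
Variables (g : {linear B -> C}) (phi : {linear B -> U}).
Hypotheses (g_surj : forall c, exists b, g b = c)
           (phi_ker : forall b, g b = 0 -> phi b = 0).

Lemma epi_lift_ex c : exists b, g b == c.
Proof. by have [b <-] := g_surj c; exists b. Qed.

Definition epi_lift c : U := phi (xchoose (epi_lift_ex c)).

Lemma epi_liftK b : epi_lift (g b) = phi b.
Proof.
have /eqP gb' := xchooseP (epi_lift_ex (g b)).
by apply/eqP; rewrite -subr_eq0 -linearB phi_ker // linearB gb' subrr.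
Qed.

Lemma epi_lift_is_linear : linear epi_lift.
Proof.
move=> a c c'; have [b <-] := g_surj c; have [b' <-] := g_surj c'.
by rewrite -linearP !epi_liftK linearP.
Qed.

Lemma lift_through_epi : {h : {linear C -> U} | forall b, h (g b) = phi b}.
Proof.
exists (HB.pack_for {linear C -> U} epi_lift
  (GRing.isLinear.Build R C U *:%R epi_lift epi_lift_is_linear)).
exact: epi_liftK.
Qed.

End LiftThroughEpi.

Section ShortExact.
Variables (R : comPzRingType) (A B C : lmodType R).
Variables (f : {linear A -> B}) (g : {linear B -> C}).
Hypothesis fg_exact : short_exact f g.

Lemma short_exact_comp0 a : g (f a) = 0.
Proof. by case: fg_exact => _ [_ ker_g]; apply/ker_g; exists a. Qed.

Variable s : R.

Lemma retraction_of_section (h : {linear C -> B}) :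
  (forall c, g (h c) = s *: c) ->
  {q : {linear B -> A} |
    (forall b, f (q b) + h (g b) = s *: b) /\ (forall a, q (f a) = s *: a)}.
Proof.
move=> gh; case: fg_exact => f_inj [_ ker_g].
pose phi := eta_mul B s \- (h \o g).
have phi_im b : exists a, phi b = f a.
  by apply/ker_g; rewrite /= linearB /= gh /eta_mul linearZ subrr.
have [q fq] := lift_through_mono f_inj phi_im.
exists q; split=> [b | a]; first by rewrite fq subrK.
by apply: f_inj; rewrite fq /= short_exact_comp0 linear0 subr0 linearZ.
Qed.

Lemma section_of_retraction (q : {linear B -> A}) :
  (forall a, q (f a) = s *: a) ->
  {h : {linear C -> B} | forall c, g (h c) = s *: c}.
Proof.
move=> qf; case: fg_exact => _ [g_surj ker_g].
pose psi := eta_mul B s \- (f \o q).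
have psi_ker b : g b = 0 -> psi b = 0.
  by move=> /ker_g [a ->]; rewrite /psi /= qf /eta_mul linearZ subrr.
have [h hg] := lift_through_epi g_surj psi_ker.
exists h => c; have [b <-] := g_surj c.
by rewrite hg /= linearB /= short_exact_comp0 subr0 /eta_mul linearZ.
Qed.

End ShortExact.

Theorem proposition2p3 (R : comPzRingType) (A B C : lmodType R)
  (f : {linear A -> B}) (g : {linear B -> C}) :
  short_exact f g ->
  (w_split f g <->
     exists (n : nat) (d : 'I_n -> R), GV_ideal d /\
       exists q : 'I_n -> {linear B -> A},
         forall k, (fun a => q k (f a)) =1 eta_mul A (d k)) /\
  (forall (n : nat) (d : 'I_n -> R), GV_ideal d ->
     forall h : 'I_n -> {linear C -> B},
       (forall k, (fun c => g (h k c)) =1 eta_mul C (d k)) ->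
       exists q : 'I_n -> {linear B -> A},
         forall k, (fun a => q k (f a)) =1 eta_mul A (d k) /\
                   eta_mul B (d k) =1 (fun b => f (q k b) + h k (g b))).
Proof.
move=> fg_exact.
have retractions n (d : 'I_n -> R) (h : 'I_n -> {linear C -> B})
    (gh : forall k c, g (h k c) = d k *: c) :
    {q : 'I_n -> {linear B -> A} | forall k,
      (forall b, f (q k b) + h k (g b) = d k *: b) /\
      (forall a, q k (f a) = d k *: a)}.
  exists (fun k => sval (retraction_of_section fg_exact (gh k))) => k.
  exact: svalP (retraction_of_section fg_exact (gh k)).
split; last first.
  move=> n d _ h /retractions [q fqhg]; exists q => k.
  by have [fqhgE qfE] := fqhg k; split=> // b; rewrite fqhgE.
split=> [[n [d [dGV [h /retractions [q fqhg]]]]] | [n [d [dGV [q qf]]]]].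
  by exists n, d; split=> //; exists q => k; have [] := fqhg k.
exists n, d; split=> //.
exists (fun k => sval (section_of_retraction fg_exact (qf k))) => k.
exact: svalP (section_of_retraction fg_exact (qf k)).
Qed.
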